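(* Let $(E,\rho)$ be a weighted space and $P:\mathscr{B}^\rho(E)\to\mathscr{B}^\rho(E)$ a map. Then $P$ is a smooth operator algebra homomorphism if and only if there is a map $\psi:E\to E$ such that the restriction $\psi|_{K_R}:K_R\to E$ is continuous for every $R>0$, $\sup_{x\in E}\rho(\psi(x))/\rho(x)<\infty$, and $Pf=f\circ\psi$ for all $f\in\mathscr{B}^\rho(E)$. The map $\psi$ is uniquely determined by $P$.
   Context: A weighted space is a pair $(E,\rho)$ where $E$ is a completely regular Hausdorff topological space and $\rho:E\to(0,\infty)$ is an admissible weight function, meaning that for every $R\ge 0$ the sublevel set $K_R:=\{x\in E:\rho(x)\le R\}$ is compact. For $f:E\to\mathbb{R}$ put $\|f\|_\rho:=\sup_{x\in E}|f(x)|/\rho(x)$; $\mathscr{B}^\rho(E)$ denotes the closure of $C_b(E)$ with respect to $\|\cdot\|_\rho$ inside $\{f:E\to\mathbb{R}:\|f\|_\rho<\infty\}$. A continuous linear map $P:\mathscr{B}^\rho(E)\to\mathscr{B}^\rho(E)$ is a smooth operator algebra homomorphism if for every $n$, every bounded smooth $\phi:\mathbb{R}^n\to\mathbb{R}$ and all $f_1,\dots,f_n\in\mathscr{B}^\rho(E)$ one has $P(\phi(f_1(\cdot),\dots,f_n(\cdot)))=\phi(Pf_1(\cdot),\dots,Pf_n(\cdot))$. *)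

From HB Require Import structures.
From mathcomp Require Import all_boot all_order all_algebra.
From mathcomp Require Import all_classical all_reals all_analysis.
Set Implicit Arguments. Unset Strict Implicit. Unset Printing Implicit Defensive.
Import Order.TTheory GRing.Theory Num.Theory.
Import numFieldNormedType.Exports.
Local Open Scope classical_set_scope.
Local Open Scope ring_scope.

Section Weighted.
Variables (R : realType) (E : topologicalType).

Definition sublevel (rho : E -> R) (r : R) : set E := [set x | rho x <= r].

Definition admissible_weight (rho : E -> R) : Prop :=
  (forall x, 0 < rho x) /\ (forall r : R, 0 <= r -> compact (sublevel rho r)).

Definition weighted_space (rho : E -> R) : Prop :=
  completely_regular_space E /\ hausdorff_space E /\ admissible_weight rho.

Definition wbounded (rho : E -> R) (f : E -> R) : Prop :=
  has_ubound (range (fun x => `|f x| / rho x)).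

Definition wnorm (rho : E -> R) (f : E -> R) : R :=
  sup (range (fun x => `|f x| / rho x)).

Definition Cb (g : E -> R) : Prop :=
  continuous g /\ exists M : R, forall x, `|g x| <= M.

(* B^rho(E): closure of C_b(E) (within the functions of finite rho-norm)
   w.r.t. ||.||_rho *)
Definition Brho (rho : E -> R) (f : E -> R) : Prop :=
  wbounded rho f /\
  forall eps : R, 0 < eps ->
    exists g : E -> R, Cb g /\ wbounded rho g /\ wnorm rho (f \- g) < eps.

(* P : B^rho -> B^rho continuous linear (P given as a map on all functions;
   only its values on B^rho matter) *)
Definition cont_linear_on_Brho (rho : E -> R) (P : (E -> R) -> (E -> R)) : Prop :=
  (forall f, Brho rho f -> Brho rho (P f)) /\
  (forall (a : R) f g, Brho rho f -> Brho rho g ->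
     P (fun x => a * f x + g x) = (fun x => a * P f x + P g x)) /\
  (forall f, Brho rho f -> forall eps : R, 0 < eps ->
     exists2 delta : R, 0 < delta &
       forall g, Brho rho g -> wnorm rho (f \- g) < delta ->
         wnorm rho (P f \- P g) < eps).

End Weighted.

Fixpoint Ck (R : realType) (n k : nat) (phi : 'rV[R]_n -> R) : Prop :=
  match k with
  | 0 => continuous phi
  | k.+1 => (forall x, differentiable phi x) /\
            (forall v : 'rV[R]_n, Ck k (fun x => 'D_v phi x))
  end.

Definition smooth_fun (R : realType) (n : nat) (phi : 'rV[R]_n -> R) : Prop :=
  forall k, Ck k phi.

Definition bounded_fun (R : realType) (n : nat) (phi : 'rV[R]_n -> R) : Prop :=
  exists M : R, forall x, `|phi x| <= M.

Definition smooth_op_alg_hom (R : realType) (E : topologicalType)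
    (rho : E -> R) (P : (E -> R) -> (E -> R)) : Prop :=
  cont_linear_on_Brho rho P /\
  forall (n : nat) (phi : 'rV[R]_n -> R), smooth_fun phi -> bounded_fun phi ->
  forall fs : 'I_n -> (E -> R), (forall i, Brho rho (fs i)) ->
    P (fun x => phi (\row_i fs i x)) = (fun x => phi (\row_i P (fs i) x)).

Definition represents (R : realType) (E : topologicalType)
    (rho : E -> R) (P : (E -> R) -> (E -> R)) (psi : E -> E) : Prop :=
  (forall r : R, 0 < r -> {within sublevel rho r, continuous psi}) /\
  has_ubound (range (fun x => rho (psi x) / rho x)) /\
  (forall f, Brho rho f -> P f = f \o psi).

From Pilot Require Import Defs.
From HB Require Import structures.
From mathcomp Require Import all_boot all_order all_algebra.
From mathcomp Require Import all_classical all_reals all_analysis.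
From mathcomp Require Import ring lra.
Set Implicit Arguments. Unset Strict Implicit. Unset Printing Implicit Defensive.
Import Order.TTheory GRing.Theory Num.Theory.
Import numFieldNormedType.Exports.
Local Open Scope classical_set_scope.
Local Open Scope ring_scope.

(* If P f = f \o psi with rho \o psi <= C rho, then P is linear, continuous
   (||f \o psi||_rho <= C ||f||_rho) and commutes with every phi, once one knows
   that phi(f_1, ..., f_n) stays in B^rho: approximate the f_i by C_b functions
   on a large sublevel set K_r, where phi is uniformly continuous on a cube, and
   use the bound |phi| <= M outside K_r.
   Conversely, continuity gives |P h x| <= A ||h||_rho rho(x). If g |-> P g x
   were not evaluation at a point of K := K_(2 A rho(x)), compactness of K would
   yield finitely many g_i in C_b and a product h of peaks cos^2 (c_i (g_i - a_i))
   with values in [0, 1] and below (inf rho) / (2 A rho(x)) on K, while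
   P h x = 1; then |P h x| <= 1/2, a contradiction. Density of C_b extends the point
   evaluation to B^rho and defines psi; psi is continuous on each K_r because
   C_b functions determine the topology of the completely regular space E, and
   it is unique because they separate points. *)

Section Smooth.
Variables (R : realType) (n : nat).
Implicit Types f g : 'rV[R]_n -> R.

Lemma CkW k f : Ck k.+1 f -> Ck k f.
Proof.
elim: k f => [|k IH] f /= [df Hd]; first by move=> x; exact: differentiable_continuous.
by split=> // v; apply: IH.
Qed.

Lemma Ck_cst k (c : R) : Ck k (fun _ : 'rV[R]_n => c).
Proof.
elim: k c => [|k IH] c /=; first exact: cst_continuous.
split=> [x|v]; first exact: differentiable_cst.
have -> : (fun x => 'D_v (fun _ : 'rV[R]_n => c) x) = (fun _ => 0).
  by apply/funext => x; rewrite derive_cst.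
exact: IH.
Qed.

Lemma CkD k f g : Ck k f -> Ck k g -> Ck k (fun x => f x + g x).
Proof.
elim: k f g => [|k IH] f g /=; first by move=> cf cg x; exact: continuousD (cf x) (cg x).
move=> [df Hf] [dg Hg]; split=> [x|v]; first exact: differentiableD (df x) (dg x).
have -> : (fun x => 'D_v (fun y => f y + g y) x) = (fun x => 'D_v f x + 'D_v g x).
  by apply/funext => x; rewrite deriveD //; exact: diff_derivable.
exact: IH.
Qed.

Lemma CkM k f g : Ck k f -> Ck k g -> Ck k (fun x => f x * g x).
Proof.
elim: k f g => [|k IH] f g /=; first by move=> cf cg x; exact: continuousM (cf x) (cg x).
move=> [df Hf] [dg Hg]; split=> [x|v]; first exact: differentiableM (df x) (dg x).
have -> : (fun x => 'D_v (fun y => f y * g y) x) =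
    (fun x => f x * 'D_v g x + g x * 'D_v f x).
  by apply/funext => x; rewrite deriveM //; exact: diff_derivable.
by apply: CkD; apply: IH => //; apply: CkW; split.
Qed.

Lemma Ck_prod k N (F : 'I_N -> 'rV[R]_n -> R) :
  (forall i, Ck k (F i)) -> Ck k (fun t => \prod_(i < N) F i t).
Proof.
elim: N F => [|N IH] F HF.
  under eq_fun do rewrite big_ord0; exact: Ck_cst.
under eq_fun do rewrite big_ord_recr /=.
by apply: CkM; [apply: IH => i|]; apply: HF.
Qed.

Lemma Ck_coord k (i : 'I_n) : Ck k (fun x : 'rV[R]_n => x ord0 i).
Proof.
case: k => [|k] /=; first by move=> x; exact/differentiable_continuous/differentiable_coord.
split=> [x|v]; first exact: differentiable_coord.
have -> : (fun x => 'D_v (fun y : 'rV[R]_n => y ord0 i) x) = (fun _ => v ord0 i).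
  apply/funext => x; rewrite deriveE; last exact: differentiable_coord.
  have coord_lin : linear (fun y : 'rV[R]_n => y ord0 i) by move=> a y z; rewrite !mxE.
  pose coordL : {linear 'rV[R]_n -> R} :=
    HB.pack (fun y : 'rV[R]_n => y ord0 i) (GRing.isLinear.Build _ _ _ _ _ coord_lin).
  rewrite (_ : (fun _ => _) = coordL) // diff_lin //; exact: coord_continuous.
exact: Ck_cst.
Qed.

Lemma Ck_cos_sin k f :
  Ck k f -> Ck k (fun x => cos (f x)) /\ Ck k (fun x => sin (f x)).
Proof.
elim: k f => [|k IH] f /=.
  by move=> cf; split=> x; apply: continuous_comp (cf x) _;
    [exact: continuous_cos | exact: continuous_sin].
move=> [df Hf].
have dcos y : differentiable (@cos R) y.
  by apply/derivable1_diffP; have [] := is_derive_cos y.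
have dsin y : differentiable (@sin R) y.
  by apply/derivable1_diffP; have [] := is_derive_sin y.
have [IHc IHs] : Ck k (fun x => cos (f x)) /\ Ck k (fun x => sin (f x)).
  by apply: IH; apply: CkW; split.
have chain (h : R -> R) h' v x : differentiable h (f x) -> is_derive (f x) 1 h (h' (f x)) ->
    'D_v (fun y => h (f y)) x = h' (f x) * 'D_v f x.
  move=> dh hh'; rewrite (deriveE v (differentiable_comp (df x) dh)).
  rewrite (diff_comp (df x) dh) /= diff1E // derive1E.
  by rewrite (@derive_val _ _ _ _ _ _ _ hh') -deriveE // mulrC.
split; split=> [x|v]; do ?exact: differentiable_comp.
- under eq_fun do rewrite (chain _ (fun t => - sin t) _ _ (dcos _) (is_derive_cos _)).
  apply: CkM (Hf v); under eq_fun do rewrite -mulN1r; exact: CkM (Ck_cst _ _) IHs.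
- under eq_fun do rewrite (chain _ cos _ _ (dsin _) (is_derive_sin _)).
  exact: CkM (Hf v).
Qed.

End Smooth.

Section Peak.
Variable R : realType.

Definition peak (a b t : R) : R := cos (pi / 2 / (b - a) * (t - a)) ^+ 2.

Lemma peak_at_left a b : peak a b a = 1.
Proof. by rewrite /peak subrr mulr0 cos0 expr1n. Qed.

Lemma peak_at_right a b : a != b -> peak a b b = 0.
Proof. by move=> ab; rewrite /peak divfK ?subr_eq0 1?eq_sym// cos_pihalf expr0n. Qed.

Lemma peak_ge0 a b t : 0 <= peak a b t.
Proof. exact: sqr_ge0. Qed.

Lemma peak_le1 a b t : peak a b t <= 1.
Proof. by rewrite /peak cos2sin2 lerBlDr lerDl sqr_ge0. Qed.

Lemma continuous_peak a b : continuous (peak a b).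
Proof.
move=> t; rewrite /peak; under eq_fun do rewrite expr2.
have hc : continuous (fun t : R => cos (pi / 2 / (b - a) * (t - a))).
  move=> s; apply: (@continuous_comp _ _ _ (fun t => pi / 2 / (b - a) * (t - a)) cos);
    last exact: continuous_cos.
  apply: (@continuousM _ _ (fun=> _) (fun t => t - a)); first exact: cst_continuous.
  by apply: (@continuousB _ _ _ id (fun=> a)); [exact: cvg_id | exact: cst_continuous].
exact: continuousM (hc t) (hc t).
Qed.

Lemma Ck_peak_coord n k a b (i : 'I_n) : Ck k (fun t : 'rV[R]_n => peak a b (t ord0 i)).
Proof.
rewrite /peak; under eq_fun do rewrite expr2.
have Hlin : Ck k (fun t : 'rV[R]_n => pi / 2 / (b - a) * (t ord0 i - a)).
  under eq_fun do rewrite mulrBr.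
  by apply: CkD; [apply: CkM; [apply: Ck_cst | apply: Ck_coord] | apply: Ck_cst].
have [Hc _] := Ck_cos_sin Hlin.
exact: CkM.
Qed.

Definition peak_prod N (a b : 'I_N -> R) (t : 'rV[R]_N) : R :=
  \prod_(i < N) peak (a i) (b i) (t ord0 i).

Variables (N : nat) (a b : 'I_N -> R).

Lemma smooth_peak_prod : smooth_fun (peak_prod a b).
Proof. by move=> k; apply: Ck_prod => i; exact: Ck_peak_coord. Qed.

Lemma peak_prod_ge0 t : 0 <= peak_prod a b t.
Proof. by apply: prodr_ge0 => i _; exact: peak_ge0. Qed.

Lemma peak_prod_le_peak t i : peak_prod a b t <= peak (a i) (b i) (t ord0 i).
Proof.
rewrite /peak_prod (bigD1 i) //= -[leRHS]mulr1 ler_wpM2l ?peak_ge0 //.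
by apply: prodr_ile1 => j _; rewrite peak_ge0 peak_le1.
Qed.

Lemma peak_prod_le1 t : peak_prod a b t <= 1.
Proof. by apply: prodr_ile1 => j _; rewrite peak_ge0 peak_le1. Qed.

Lemma bounded_peak_prod : Defs.bounded_fun (peak_prod a b).
Proof. by exists 1 => t; rewrite ger0_norm ?peak_prod_ge0 ?peak_prod_le1. Qed.

Lemma peak_prod_row_left : peak_prod a b (\row_i a i) = 1.
Proof. by apply: big1 => i _; rewrite mxE peak_at_left. Qed.

End Peak.

Section RowVectors.
Variables (R : realType) (n : nat).

Definition cube (B : R) : set 'rV[R]_n := [set v | forall i, `[- B, B]%classic (v ord0 i)].

Lemma compact_cube B : compact (cube B).
Proof. by apply: (@rV_compact _ n (fun=> `[- B, B]%classic)) => i; exact: segment_compact. Qed.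

Lemma ball_rowP (s t : 'rV[R]_n) e : 0 < e ->
  ball s e t <-> forall i, `|s ord0 i - t ord0 i| < e.
Proof.
move=> e0; split=> [[_ H] i|H]; first by have := H ord0 i; rewrite -ball_normE.
by split=> // i j; rewrite (ord1 i) -ball_normE /=; exact: H.
Qed.

Lemma continuous_row (T : topologicalType) (gs : 'I_n -> T -> R) :
  (forall i, continuous (gs i)) -> continuous (fun x => \row_i gs i x : 'rV[R]_n).
Proof.
move=> cg x U /nbhs_ballP [e e0 HU].
have : \forall y \near x, forall i, ball (gs i x) e (gs i y).
  by apply: filter_forall => i; apply: (cg i x); exact: nbhsx_ballx.
apply: filterS => y Hy; apply: HU; apply/(ball_rowP _ _ e0) => i.
by rewrite !mxE; have := Hy i; rewrite -ball_normE.
Qed.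

Lemma compact_uniform_continuity (phi : 'rV[R]_n -> R) (S : set 'rV[R]_n) (e : R) :
  continuous phi -> compact S -> 0 < e ->
  exists2 eta, 0 < eta & forall s t : 'rV[R]_n, S s ->
    (forall i, `|s ord0 i - t ord0 i| < eta) -> `|phi s - phi t| < e.
Proof.
move=> cphi /compact_near_coveringP cS e0.
have H : \forall eta \near (0:R)^'+, S `<=` (fun s => forall t : 'rV[R]_n,
    (forall i, `|s ord0 i - t ord0 i| < eta) -> `|phi s - phi t| < e).
  apply: (cS R (0:R)^'+) => s0 _.
  have : nbhs s0 (phi @^-1` ball (phi s0) (e / 2)).
    by apply: (cphi s0); apply: nbhsx_ballx; rewrite divr_gt0.
  move=> /nbhs_ballP [d d0 Hd].
  exists (ball s0 (d / 2), [set eta | eta < d / 2]) => /=.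
    by split; [apply: nbhsx_ballx | apply: nbhs_right_lt]; rewrite divr_gt0.
  move=> [s eta] /= [/(ball_rowP _ _ (divr_gt0 d0 (ltr0Sn _ 1))) bs he] t Ht.
  have near_s0 (u : 'rV[R]_n) :
      (forall i, `|s ord0 i - u ord0 i| < d / 2) -> `|phi s0 - phi u| < e / 2.
    move=> Hu; have : ball s0 d u.
      apply/(ball_rowP _ _ d0) => i; rewrite -(subrKA (s ord0 i)) (splitr d).
      exact: le_lt_trans (ler_normD _ _) (ltrD (bs i) (Hu i)).
    by move/Hd; rewrite /= -ball_normE.
  have -> : phi s - phi t = (phi s0 - phi t) - (phi s0 - phi s) by ring.
  rewrite (splitr e); apply: le_lt_trans (ler_normB _ _) _.
  apply: ltrD; apply: near_s0 => i; first by apply: lt_trans (Ht i) he.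
  by rewrite subrr normr0 divr_gt0.
have [eta [He eta0]] := filter_ex (filterI H (nbhs_right_gt 0)).
by exists eta => // s t Ss; apply: He.
Qed.

End RowVectors.

Lemma compact_seq_subcover (T : topologicalType) (K : set T) (U : T -> set T) :
  compact K -> (forall y, K y -> nbhs y (U y)) ->
  exists l : seq T, (forall d, d \in l -> K d) /\
    forall z, K z -> exists2 d, d \in l & U d z.
Proof.
move=> /compact_near_coveringP cK HU.
(* near-covering along the filter of "eventually contains every finite list"
   extracts a finite subcover *)
pose Ffin (Q : set (seq T)) := exists l : seq T, forall D, {subset l <= D} -> Q D.
have FF : Filter Ffin.
  split; first by exists [::].
  - move=> Q1 Q2 [l1 H1] [l2 H2]; exists (l1 ++ l2) => D sD.
    by split; [apply: H1 | apply: H2] => z zl; apply: sD; rewrite mem_cat zl ?orbT.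
  - by move=> Q1 Q2 sQ [l H]; exists l => D sD; apply/sQ/H.
have [|l Hl] := cK (seq T) Ffin (fun D z => exists2 d, d \in D & K d /\ U d z) FF.
  move=> z Kz; exists (U z, [set D : seq T | z \in D]) => /=.
    by split; [exact: HU | exists [:: z] => D; apply; rewrite inE].
  by move=> [z' D] /= [Uz zD]; exists z.
exists [seq d <- l | asbool (K d)]; split=> [d|z Kz].
  by rewrite mem_filter => /andP [/asboolP].
have [d dl [Kd Udz]] := Hl l (fun _ h => h) z Kz.
by exists d => //; rewrite mem_filter dl andbT; apply/asboolP.
Qed.

Section WeightedSpace.
Variables (R : realType) (E : topologicalType) (rho : E -> R).
Hypothesis hw : weighted_space rho.
Implicit Types (f g u : E -> R) (a : R).

Lemma rho_gt0 x : 0 < rho x.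
Proof. by case: hw => _ [_ [+ _]]; apply. Qed.

Lemma compact_sublevel r : 0 <= r -> compact (sublevel rho r).
Proof. by case: hw => _ [_ [_ +]]; apply. Qed.

Lemma rho_lsc r x : 0 <= r -> r < rho x -> \forall y \near x, r < rho y.
Proof.
move=> r0 rx; have : nbhs x (~` sublevel rho r).
  apply: open_nbhs_nbhs; split; last by apply/negP; rewrite -ltNge.
  apply: closed_openC; apply: compact_closed (compact_sublevel r0).
  by case: hw => _ [].
by apply: filterS => y /negP; rewrite -ltNge.
Qed.

Lemma rho_bounded_below : exists2 m, 0 < m & forall x, m <= rho x.
Proof.
have /compact_near_coveringP cK := compact_sublevel ler01.
have : \forall e \near (0:R)^'+, sublevel rho 1 `<=` (fun x => e < rho x).
  apply: (cK R (0:R)^'+ (fun e x => e < rho x)) => x _.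
  have hx := rho_gt0 x.
  exists ([set y | rho x / 2 < rho y], [set e | e < rho x / 2]) => /=.
    split; last by apply: nbhs_right_lt; rewrite divr_gt0.
    by apply: rho_lsc; rewrite ?divr_ge0 ?ltW// ltr_pdivrMr// ltr_pMr// ltr1n.
  by move=> [y e] /= [hy he]; apply: lt_trans hy.
move=> H; have [e [He e0]] := filter_ex (filterI H (nbhs_right_gt 0)).
exists (Num.min e 1) => [|x]; first by rewrite lt_min e0 ltr01.
have [x1|x1] := leP (rho x) 1; first by rewrite ge_min (ltW (He x x1)).
by rewrite ge_min (ltW x1) orbT.
Qed.

Lemma wbounded_le f c : (forall x, `|f x| <= c * rho x) -> wbounded rho f.
Proof. by move=> H; exists c => _ [x _ <-]; rewrite ler_pdivrMr ?rho_gt0. Qed.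

Lemma wbounded_bounded f M : (forall x, `|f x| <= M) -> wbounded rho f.
Proof.
move=> HM; have [m m0 Hm] := rho_bounded_below.
apply: (@wbounded_le _ (M / m)) => x; apply: le_trans (HM x) _.
have M0 : 0 <= M := le_trans (normr_ge0 _) (HM x).
by rewrite -mulrA ler_peMr // ler_pdivlMl // mulr1 Hm.
Qed.

Lemma wnorm_pointwise f x : wbounded rho f -> `|f x| <= wnorm rho f * rho x.
Proof.
by move=> hb; rewrite -ler_pdivrMr ?rho_gt0 //; apply: ub_le_sup => //; exists x.
Qed.

Lemma wnorm_sublevel f r x : wbounded rho f -> rho x <= r -> `|f x| <= wnorm rho f * r.
Proof.
move=> hb xr; apply: le_trans (wnorm_pointwise x hb) (ler_wpM2l _ xr).
by rewrite -(pmulr_lge0 _ (rho_gt0 x)); exact: le_trans (wnorm_pointwise x hb).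
Qed.

Lemma wnorm_uninhabited f : ~ inhabited E -> wnorm rho f = 0.
Proof.
move=> nE; rewrite /wnorm; suff -> : range (fun x => `|f x| / rho x) = set0 by rewrite sup0.
by apply/seteqP; split=> // z [y _ _]; apply: nE.
Qed.

Lemma wnorm_le f c : 0 <= c -> (forall x, `|f x| <= c * rho x) -> wnorm rho f <= c.
Proof.
move=> c0 H; have [[x]|nE] := pselect (inhabited E); last by rewrite wnorm_uninhabited.
apply: ge_sup; first by exists (`|f x| / rho x); exists x.
by move=> _ [y _ <-]; rewrite ler_pdivrMr ?rho_gt0.
Qed.

Lemma wnorm_ge0 f : wbounded rho f -> 0 <= wnorm rho f.
Proof.
move=> hb; have [[x]|nE] := pselect (inhabited E); last by rewrite wnorm_uninhabited.
by rewrite -(pmulr_lge0 _ (rho_gt0 x)); exact: le_trans (wnorm_pointwise x hb).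
Qed.

Lemma lin_pointwise a f g x : wbounded rho f -> wbounded rho g ->
  `|a * f x + g x| <= (`|a| * wnorm rho f + wnorm rho g) * rho x.
Proof.
move=> hf hg; rewrite mulrDl; apply: le_trans (ler_normD _ _) _.
rewrite normrM -mulrA; apply: lerD; last exact: wnorm_pointwise.
by apply: ler_wpM2l => //; exact: wnorm_pointwise.
Qed.

Lemma row_sublevel_bound n (fs : 'I_n -> E -> R) r z i :
  (forall j, wbounded rho (fs j)) -> 0 <= r -> rho z <= r ->
  `|fs i z| <= \sum_j wnorm rho (fs j) * r.
Proof.
move=> wfs r0 zr; apply: le_trans (wnorm_sublevel (wfs i) zr) _.
rewrite (bigD1 i) //= lerDl sumr_ge0 // => j _.
by rewrite mulr_ge0 ?wnorm_ge0.
Qed.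

Lemma wbounded_lin a f g : wbounded rho f -> wbounded rho g ->
  wbounded rho (fun x => a * f x + g x).
Proof. by move=> hf hg; apply: wbounded_le => x; exact: lin_pointwise. Qed.

Lemma wnorm_lin a f g : wbounded rho f -> wbounded rho g ->
  wnorm rho (fun x => a * f x + g x) <= `|a| * wnorm rho f + wnorm rho g.
Proof.
move=> hf hg; apply: wnorm_le => [|x]; last exact: lin_pointwise.
by rewrite addr_ge0 ?mulr_ge0 ?wnorm_ge0.
Qed.

Lemma wbounded_sub f g : wbounded rho f -> wbounded rho g -> wbounded rho (f \- g).
Proof.
move=> hf hg; have := wbounded_lin (-1) hg hf.
by congr wbounded; apply/funext => x /=; rewrite mulN1r addrC.
Qed.

Lemma wnorm_comp_le f (psi : E -> E) C : wbounded rho f -> 0 <= C ->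
  (forall x, rho (psi x) <= C * rho x) -> wnorm rho (f \o psi) <= C * wnorm rho f.
Proof.
move=> hf C0 HC; apply: wnorm_le => [|x /=]; first by rewrite mulr_ge0 ?wnorm_ge0.
apply: le_trans (wnorm_pointwise _ hf) _.
by rewrite [leLHS]mulrC mulrAC; apply: ler_wpM2r; rewrite ?wnorm_ge0.
Qed.

Lemma Cb_lin a f g : Cb f -> Cb g -> Cb (fun x => a * f x + g x).
Proof.
move=> [cf [M1 H1]] [cg [M2 H2]]; split.
  move=> x; apply: (@continuousD _ _ _ (fun x => a * f x) g x) (cg x).
  by apply: (@continuousM _ _ (fun=> a) f x); [exact: cst_continuous | exact: cf].
exists (`|a| * M1 + M2) => x; apply: le_trans (ler_normD _ _) _.
by rewrite normrM lerD // ler_wpM2l.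
Qed.

Lemma Cb_Brho g : Cb g -> Brho rho g.
Proof.
move=> cg; have wg : wbounded rho g by case: cg => _ [M]; exact: wbounded_bounded.
split=> // eps e0; exists g; split=> //; split=> //.
apply: le_lt_trans e0; apply: wnorm_le => // x.
by rewrite /= subrr normr0 mul0r.
Qed.

Lemma Brho0 : Brho rho (fun _ => 0).
Proof. by apply: Cb_Brho; split; [exact: cst_continuous | exists 0 => x; rewrite normr0]. Qed.

Lemma Brho_lin a f g : Brho rho f -> Brho rho g -> Brho rho (fun x => a * f x + g x).
Proof.
move=> [wf Af] [wg Ag]; split; first exact: wbounded_lin.
move=> eps e0; have a1 : 0 < `|a| + 1 by rewrite ltr_wpDl.
have d0 : 0 < eps / (`|a| + 1) by rewrite divr_gt0.
have [f0 [cf0 [wf0 hf0]]] := Af _ d0; have [g0 [cg0 [wg0 hg0]]] := Ag _ d0.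
exists (fun x => a * f0 x + g0 x); split; first exact: Cb_lin.
split; first exact: wbounded_lin.
have -> : (fun x => a * f x + g x) \- (fun x => a * f0 x + g0 x) =
    (fun x => a * (f \- f0) x + (g \- g0) x) by apply/funext => x /=; ring.
apply: le_lt_trans (wnorm_lin _ (wbounded_sub wf wf0) (wbounded_sub wg wg0)) _.
rewrite -[eps](divfK (lt0r_neq0 a1)) mulrDr mulr1 [X in _ < X + _]mulrC.
exact: ler_ltD (ler_wpM2l (normr_ge0 a) (ltW hf0)) hg0.
Qed.

Lemma Brho_continuous_sublevel f r : Brho rho f -> 0 < r ->
  {within sublevel rho r, continuous f}.
Proof.
move=> [wf Af] r0; apply/subspace_continuousP => x Kx.
apply/cvgrPdist_lt => e e0; have e3 : 0 < e / 3 by rewrite divr_gt0.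
have [g [[cg _] [wg hg]]] := Af (e / 3 / r) (divr_gt0 e3 r0).
have close z : sublevel rho r z -> `|f z - g z| <= e / 3.
  move=> Kz; apply: le_trans (wnorm_sublevel (wbounded_sub wf wg) Kz) _.
  by rewrite -ler_pdivlMr // ltW.
rewrite near_withinE; near=> y => Ky.
have Hy : `|g x - g y| < e / 3.
  by near: y; exact: (@cvgrPdist_lt _ _ _ (nbhs x) _ g (g x)).1 (cg x) _ e3.
have -> : f x - f y = (f x - g x) + (g x - g y) + (g y - f y) by ring.
rewrite (_ : e = e / 3 + e / 3 + e / 3); last by field.
apply: le_lt_trans (ler_normD _ _) _; apply: ltr_leD; last by rewrite distrC; exact: close.
by apply: le_lt_trans (ler_normD _ _) _; apply: ler_ltD => //; exact: close.
Unshelve. all: by end_near.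
Qed.

Lemma Cb_separates_closed (a : E) (B : set E) : closed B -> ~ B a ->
  exists2 u : E -> R, Cb u & u a = 0 /\ forall b, B b -> u b = 1.
Proof.
move=> cB nBa; have sep : uniform_separator [set a] B.
  by case: hw => creg _; exact: creg.
pose u : E -> R := Urysohn [set a] B.
have u01 x : 0 <= u x <= 1.
  by have /Urysohn_range : range u (u x) by exists x.
exists u; first split; first exact: Urysohn_continuous.
  by exists 1 => x; have /andP [u0 u1] := u01 x; rewrite ger0_norm.
split; first by apply: (Urysohn_sub0 sep); exists a.
by move=> b Bb; apply: (Urysohn_sub1 sep); exists b.
Qed.

Lemma comp_Brho_inj (psi1 psi2 : E -> E) :
  (forall f, Brho rho f -> f \o psi1 = f \o psi2) -> psi1 = psi2.
Proof.
move=> H; apply/funext => x; apply: contrapT => hne.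
have cB : closed [set psi2 x].
  by apply/accessible_closed_set1/hausdorff_accessible; case: hw => _ [].
have [u cu [u1 u2]] := Cb_separates_closed cB (a := psi1 x) hne.
have := congr1 (@^~ x) (H u (Cb_Brho cu)).
by rewrite /= u1 u2 // => /eqP; rewrite eq_sym oner_eq0.
Qed.

Lemma comp_continuous_within (psi : E -> E) (A : set E) :
  (forall u, Cb u -> {within A, continuous (u \o psi)}) -> {within A, continuous psi}.
Proof.
move=> Hu; apply/subspace_continuousP => x Ax U.
rewrite nbhsE => -[V [oV Vpx] VU].
have cV : closed (~` V) by rewrite -openC setCK.
have [u cu [u0 u1]] := Cb_separates_closed cV (a := psi x) (fun nV => nV Vpx).
have half_gt0 : 0 < 2^-1 :> R by rewrite invr_gt0.
have := (subspace_continuousP _ _).1 (Hu u cu) x Ax.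
move=> /(@cvgrPdist_lt _ _ _ _ (within_filter _ _)) /(_ _ half_gt0).
rewrite /= /from_subspace /=.
apply: filterS => z /= hz; apply: VU; apply: contrapT => nVz.
by move: hz; rewrite u0 sub0r u1 // normrN normr1 => ?; lra.
Qed.

Lemma Brho_comp_row n (phi : 'rV[R]_n -> R) (fs : 'I_n -> E -> R) :
  continuous phi -> Defs.bounded_fun phi -> (forall i, Brho rho (fs i)) ->
  Brho rho (fun x => phi (\row_i fs i x)).
Proof.
move=> cphi [M HM] Bfs; have M0 : 0 <= M := le_trans (normr_ge0 _) (HM 0).
have wphi (hs : 'I_n -> E -> R) : wbounded rho (fun x => phi (\row_i hs i x)).
  by apply: wbounded_bounded => x; exact: HM.
split=> // eps e0; have [m m0 Hm] := rho_bounded_below.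
(* beyond the sublevel set K_r the crude bound 2M is already below eps/2 * rho *)
pose r := 4 * M / eps + 1.
have r0 : 0 < r by rewrite ltr_wpDl // divr_ge0 ?mulr_ge0 // ltW.
have em : 0 < eps * m / 2 by rewrite divr_gt0 ?mulr_gt0.
pose B := \sum_i wnorm rho (fs i) * r.
have [eta eta0 Heta] := compact_uniform_continuity cphi (@compact_cube _ n B) em.
have /choice [gs Hgs] : forall i, exists g,
    Cb g /\ wbounded rho g /\ wnorm rho (fs i \- g) < eta / r.
  by move=> i; apply: (Bfs i).2; rewrite divr_gt0.
exists (fun x => phi (\row_i gs i x)); split.
  split; last by exists M.
  move=> x; apply: continuous_comp (cphi _).
  by apply: continuous_row => i; case: (Hgs i) => -[].
split=> //; have e2 : eps / 2 < eps by rewrite ltr_pdivrMr // ltr_pMr // ltr1n.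
apply: le_lt_trans e2.
apply: wnorm_le => [|z /=]; first by rewrite divr_ge0 ?ltW.
have [zr|zr] := leP (rho z) r; last first.
  have e20 : 0 <= eps / 2 by rewrite divr_ge0 // ltW.
  have := le_trans (ler_normB _ _) (lerD (HM (\row_i fs i z)) (HM (\row_i gs i z))).
  have := ler_wpM2l e20 (ltW zr).
  have -> : eps / 2 * r = M + M + eps / 2 by rewrite /r; field; exact: lt0r_neq0.
  lra.
apply: le_trans (ltW (Heta _ _ _ _)) _.
- move=> i; rewrite mxE /= in_itv /= -ler_norml.
  exact: row_sublevel_bound (fun j => (Bfs j).1) (ltW r0) zr.
- move=> i; rewrite !mxE; have [_ [wg hg]] := Hgs i.
  apply: le_lt_trans (wnorm_sublevel (wbounded_sub (Bfs i).1 wg) zr) _.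
  by rewrite -ltr_pdivlMr.
by rewrite mulrAC; apply: ler_wpM2l (Hm z); rewrite divr_ge0 ?ltW.
Qed.

Lemma represents_cont_linear (P : (E -> R) -> (E -> R)) (psi : E -> E) C :
  (forall f, Brho rho f -> Brho rho (P f)) -> 0 <= C ->
  (forall x, rho (psi x) <= C * rho x) -> (forall f, Brho rho f -> P f = f \o psi) ->
  cont_linear_on_Brho rho P.
Proof.
move=> PB C0 HC Hrep; split=> //; split=> [a f g Bf Bg|f Bf eps e0].
  by rewrite !Hrep //; exact: Brho_lin.
have C1 : 0 < C + 1 by rewrite ltr_wpDl.
exists (eps / (C + 1)) => [|g Bg fg]; first by rewrite divr_gt0.
have -> : P f \- P g = (f \- g) \o psi by rewrite !Hrep.
have wfg := wbounded_sub Bf.1 Bg.1.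
apply: le_lt_trans (wnorm_comp_le wfg C0 HC) _.
have CC1 : C <= C + 1 by rewrite lerDl.
apply: le_lt_trans (ler_wpM2r (wnorm_ge0 wfg) CC1) _.
by rewrite mulrC -ltr_pdivlMr.
Qed.

Lemma represents_smooth_op_alg_hom (P : (E -> R) -> (E -> R)) (psi : E -> E) :
  (forall f, Brho rho f -> Brho rho (P f)) -> represents rho P psi ->
  smooth_op_alg_hom rho P.
Proof.
move=> PB [_ [[C HC] Hrep]]; split.
  apply: (represents_cont_linear PB (normr_ge0 C) _ Hrep) => x.
  rewrite -ler_pdivrMr ?rho_gt0 //.
  by apply: le_trans (ler_norm C); apply: HC; exists x.
move=> n phi sphi bphi fs Bfs.
rewrite Hrep; last exact: Brho_comp_row (sphi 0%N) bphi Bfs.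
by apply/funext => x /=; congr phi; apply/rowP => i; rewrite !mxE Hrep.
Qed.

Lemma BrhoZ a f : Brho rho f -> Brho rho (fun x => a * f x).
Proof.
move=> Bf; have := Brho_lin a Bf Brho0.
by congr Brho; apply/funext => x; rewrite addr0.
Qed.

Section Homomorphism.
Variable P : (E -> R) -> (E -> R).
Hypothesis Ph : smooth_op_alg_hom rho P.

Lemma hom_Brho f : Brho rho f -> Brho rho (P f).
Proof. by case: Ph => -[+ _] _; apply. Qed.

Lemma hom_lin a f g : Brho rho f -> Brho rho g ->
  P (fun x => a * f x + g x) = (fun x => a * P f x + P g x).
Proof. by case: Ph => -[_ [+ _]] _; apply. Qed.

Definition weight_bounded_by (A : R) : Prop :=
  forall h b, Brho rho h -> 0 < b -> (forall y, `|h y| <= b * rho y) ->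
  forall x, `|P h x| <= A * b * rho x.

Lemma hom0 : P (fun _ => 0) = (fun _ => 0).
Proof.
have := hom_lin 1 Brho0 Brho0; under eq_fun do rewrite mul1r addr0.
move=> H; apply/funext => x; have /= := congr1 (@^~ x) H; lra.
Qed.

Lemma homZ a f : Brho rho f -> P (fun x => a * f x) = (fun x => a * P f x).
Proof.
move=> Bf; have -> : (fun x => a * f x) = (fun x => a * f x + 0).
  by apply/funext => x; rewrite addr0.
by rewrite (hom_lin a Bf Brho0) hom0; apply/funext => x; rewrite addr0.
Qed.

(* Continuity of P at 0, rescaled. *)
Lemma hom_weighted_bound : exists2 A, 0 < A & weight_bounded_by A.
Proof.
case: Ph => -[_ [_ Pc]] _; have [d d0 Hd] := Pc _ Brho0 1 ltr01.
exists (2 / d) => [|h b Bh b0 Hh x]; first by rewrite divr_gt0.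
pose s := d / (2 * b); have s0 : 0 < s by rewrite divr_gt0 ?mulr_gt0.
have Bsh := BrhoZ s Bh.
have small : wnorm rho ((fun _ => 0) \- (fun y => s * h y)) < d.
  apply: (@le_lt_trans _ _ (d / 2)); last by rewrite ltr_pdivrMr // ltr_pMr // ltr1n.
  apply: wnorm_le => [|y /=]; first by rewrite divr_ge0 // ltW.
  rewrite sub0r normrN normrM (ger0_norm (ltW s0)).
  have -> : d / 2 * rho y = s * (b * rho y) by rewrite /s; field; rewrite gt_eqF.
  by apply: ler_wpM2l; [exact: ltW | exact: Hh].
have := Hd _ Bsh small; rewrite homZ // hom0 => Psh.
have wPsh : wbounded rho ((fun _ => 0) \- (fun y => s * P h y)).
  by apply: wbounded_sub; [exact: Brho0.1 | rewrite -homZ //; exact: (hom_Brho Bsh).1].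
have := le_trans (wnorm_pointwise x wPsh) (ler_wpM2r (ltW (rho_gt0 x)) (ltW Psh)).
rewrite /= sub0r normrN normrM (ger0_norm (ltW s0)) mul1r => sPh.
have -> : 2 / d * b * rho x = rho x / s by rewrite /s; field; rewrite !gt_eqF.
by rewrite ler_pdivlMr // mulrC.
Qed.

(* h is a product of peaks, one per point of a finite subcover of K; the
   homomorphism property evaluates every factor at its top, so P h x = 1. *)
Lemma hom_peak x (K : set E) q : compact K -> 0 < q ->
  (forall y, K y -> exists2 g, Cb g & P g x != g y) ->
  exists h, [/\ Cb h, P h x = 1, (forall z, 0 <= h z <= 1) & (forall z, K z -> h z < q)].
Proof.
move=> cK q0 sep.
have /choice [G HG] : forall y, exists g, K y -> Cb g /\ P g x != g y.
  move=> y; have [Ky|nKy] := pselect (K y); last by exists (fun _ => 0).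
  by have [g cg ne] := sep y Ky; exists g.
pose w y := peak (P (G y) x) (G y y) \o G y.
have w_small y : K y -> nbhs y [set z | w y z < q].
  move=> Ky; have [[cg _] ne] := HG y Ky.
  apply: open_nbhs_nbhs; split; last by rewrite /= /w /= peak_at_right.
  apply: (open_comp (f := w y) (D := [set t | t < q])); last exact: open_lt.
  by move=> t _; apply: (continuous_comp (cg t)); exact: continuous_peak.
have [l [lK cover]] := compact_seq_subcover cK w_small.
pose yi (i : 'I_(size l)) := nth x l i.
have cbG i : Cb (G (yi i)) by have [] := HG _ (lK _ (mem_nth x (ltn_ord i))).
pose a i := P (G (yi i)) x; pose b i := G (yi i) (yi i).
pose h z := peak_prod a b (\row_i G (yi i) z).
have h01 z : 0 <= h z <= 1 by rewrite peak_prod_ge0 peak_prod_le1.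
exists h; split=> // [|| z Kz].
- split; last by exists 1 => z; have /andP [h0 h1] := h01 z; rewrite ger0_norm.
  move=> z; apply: continuous_comp; last by have /= := smooth_peak_prod a b 0%N; apply.
  by apply: continuous_row => i; case: (cbG i).
- case: Ph => _ /(_ _ _ (smooth_peak_prod a b) (bounded_peak_prod a b)) Psm.
  rewrite /h Psm => [|i]; last exact: Cb_Brho.
  by rewrite -[X in peak_prod _ _ X]/(\row_i a i) peak_prod_row_left.
have [d dl wdz] := cover z Kz.
have il : (index d l < size l)%N by rewrite index_mem.
pose i := Ordinal il.
have yi_d : yi i = d by rewrite /yi /= nth_index.
apply: le_lt_trans (peak_prod_le_peak a b _ i) _.
by rewrite mxE /a /b yi_d.
Qed.

Section Evaluation.
Variable A : R.
Hypothesis A0 : 0 < A.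
Hypothesis HA : weight_bounded_by A.

(* A peak below [rho / r] on all of E would violate the weighted bound at x. *)
Lemma hom_eval_Cb x : exists y, rho y <= 2 * A * rho x /\ forall g, Cb g -> P g x = g y.
Proof.
pose r := 2 * A * rho x; have r0 : 0 < r by rewrite !mulr_gt0 ?rho_gt0.
have [m m0 Hm] := rho_bounded_below.
apply: contrapT => Hno.
have sep y : sublevel rho r y -> exists2 g, Cb g & P g x != g y.
  move=> Ky; apply: contrapT => nsep; apply: Hno; exists y; split=> // g cg.
  by apply/eqP; apply: contrapT => ne; apply: nsep; exists g => //; exact/negP.
have [h [ch Ph1 h01 hK]] :=
  hom_peak (compact_sublevel (ltW r0)) (divr_gt0 m0 r0) sep.
have h_small z : `|h z| <= r^-1 * rho z.
  have /andP [h0 h1] := h01 z; rewrite ger0_norm // mulrC.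
  have [Kz|nKz] := leP (rho z) r.
    by apply: ltW; apply: lt_le_trans (hK z Kz) _; rewrite ler_pM2r ?invr_gt0.
  by apply: le_trans h1 _; rewrite ler_pdivlMr // mul1r ltW.
have rV0 : 0 < r^-1 by rewrite invr_gt0.
have := HA (Cb_Brho ch) rV0 h_small x.
rewrite Ph1 normr1 /r (_ : _ * _ * rho x = 2^-1); last by field; rewrite ?gt_eqF ?rho_gt0.
by move=> ?; lra.
Qed.

Lemma hom_eval_Brho x : exists y, rho y <= 2 * A * rho x /\ forall f, Brho rho f -> P f x = f y.
Proof.
have [y [ry Hy]] := hom_eval_Cb x; exists y; split=> // f Bf.
pose C := A * rho x + rho y; have C0 : 0 < C by rewrite addr_gt0 ?mulr_gt0 ?rho_gt0.
apply/eqP; rewrite -subr_eq0 -normr_le0; apply/ler_addgt0Pr => e e0.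
have [g [cg [wg fg]]] := Bf.2 _ (divr_gt0 e0 C0).
(* the Cb function g is evaluated exactly; the error f - g is controlled by HA *)
pose d z := -1 * g z + f z.
have d_small z : `|d z| <= e / C * rho z.
  rewrite /d addrC mulN1r; apply: le_trans (wnorm_pointwise z (wbounded_sub Bf.1 wg)) _.
  by apply: ler_wpM2r; [exact: ltW (rho_gt0 z) | exact: ltW].
have := HA (Brho_lin (-1) (Cb_Brho cg) Bf) (divr_gt0 e0 C0) d_small x.
rewrite (hom_lin _ (Cb_Brho cg) Bf) /= (Hy _ cg) => Pd.
have -> : P f x - f y = (-1 * g y + P f x) - d y by rewrite /d; ring.
apply: le_trans (ler_normB _ _) _; rewrite add0r.
have -> : e = A * (e / C) * rho x + e / C * rho y by rewrite /C; field; rewrite gt_eqF.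
exact: lerD Pd (d_small y).
Qed.

End Evaluation.

Lemma hom_represented : exists psi, represents rho P psi.
Proof.
have [A A0 HA] := hom_weighted_bound.
have /choice [psi Hpsi] := hom_eval_Brho A0 HA.
have Hrep f : Brho rho f -> P f = f \o psi.
  by move=> Bf; apply/funext => z; exact: (Hpsi z).2.
exists psi; split; [|split=> //].
- move=> r r0; apply: comp_continuous_within => u cu.
  rewrite -Hrep; last exact: Cb_Brho.
  exact: (Brho_continuous_sublevel (hom_Brho (Cb_Brho cu)) r0).
- by exists (2 * A) => _ [z _ <-]; rewrite ler_pdivrMr ?rho_gt0 //; exact: (Hpsi z).1.
Qed.

End Homomorphism.

End WeightedSpace.

Unset Implicit Arguments.

Theorem mainTheorem14 (R : realType) (E : topologicalType) (rho : E -> R)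
    (P : (E -> R) -> (E -> R)) :
  weighted_space rho ->
  (forall f, Brho rho f -> Brho rho (P f)) ->
  (smooth_op_alg_hom rho P <-> exists psi : E -> E, represents rho P psi) /\
  (forall psi1 psi2 : E -> E,
     represents rho P psi1 -> represents rho P psi2 -> psi1 = psi2).
Proof.
move=> hw PB; split.
  split=> [Ph|[psi rep]]; first exact: (hom_represented hw Ph).
  exact: (represents_smooth_op_alg_hom hw PB rep).
move=> psi1 psi2 [_ [_ rep1]] [_ [_ rep2]]; apply: (comp_Brho_inj hw) => f Bf.
by rewrite -rep1 // -rep2.
Qed.
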